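(* Let $\nu\ge 1$ be an integer and $M\ge1$. For $c\in(0,1)$ let $\chi^2_\nu(c)$ denote the $c$-quantile of the chi-squared distribution with $\nu$ degrees of freedom. Let $K_1^*,\dots,K_M^*$ be real numbers and define, for each $i$, $$c_i^0=\sup\{c\in(0,1)\;:\;K_i^*>\chi^2_\nu(c)\},$$ and, with $\overline{K^*}=\sum_{i=1}^M K_i^*$, $$\overline{c^0}=\sup\Big\{c\in(0,1)\;:\;\overline{K^*}>\sum_{i=1}^M\chi^2_\nu(c)\Big\}.$$ Then $\overline{c^0}\ \ge\ \min_i c_i^0$.
   Context: Interpretation: there are $M$ computing nodes; $K_i^*$ is the observed value of a chi-squared goodness-of-fit test statistic on node $i$ (with $\nu=t-w-1$ degrees of freedom, $t$ the number of cells and $w$ the number of fitted parameters), $c_i^0$ is the confidence level of the fitted local distribution on node $i$, the global test statistic is the sum $\overline{K}=\sum_i K_i$ of the local ones, and $\overline{c^0}$ is the global confidence level. Suprema are taken over the indicated subsets of $(0,1)$. *)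

From HB Require Import structures.
From mathcomp Require Import all_boot all_order all_algebra.
From mathcomp Require Import all_classical all_reals all_analysis.
Set Implicit Arguments. Unset Strict Implicit. Unset Printing Implicit Defensive.
Import Order.TTheory GRing.Theory Num.Theory.
Local Open Scope classical_set_scope.
Local Open Scope ring_scope.

Definition chi2_kernel {R : realType} (nu : nat) (x : R) : R :=
  if 0 < x then x `^ (nu%:R / 2 - 1) * expR (- x / 2) else 0.

(* CDF of the chi-squared distribution: the kernel integrated up to x,
   normalized by its total integral (= 2^(nu/2) Gamma(nu/2)). *)
Definition chi2_cdf {R : realType} (nu : nat) (x : R) : R :=
  fine (\int[@lebesgue_measure R]_(t in `]-oo, x]) (chi2_kernel nu t)%:E)
  / fine (\int[@lebesgue_measure R]_(t in [set: R]) (chi2_kernel nu t)%:E).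

Definition chi2_quantile {R : realType} (nu : nat) (c : R) : R :=
  inf [set x : R | c <= chi2_cdf nu x].

Definition conf_level {R : realType} (nu : nat) (K : R) : R :=
  sup [set c : R | 0 < c < 1 /\ chi2_quantile nu c < K].

Definition global_conf_level {R : realType} (nu M : nat) (K : 'I_M -> R) : R :=
  sup [set c : R | 0 < c < 1 /\
       \sum_(i < M) chi2_quantile nu c < \sum_(i < M) K i].

From HB Require Import structures.
From mathcomp Require Import all_boot all_order all_algebra.
From mathcomp Require Import all_classical all_reals all_analysis.
From mathcomp Require Import measurable_realfun.
From mathcomp Require Import lra.
Import Order.TTheory GRing.Theory Num.Theory.
Local Open Scope ring_scope.
Local Open Scope classical_set_scope.

(* For 0 < c < min_i c_i^0, each c_i^0 exceeds c, so some c_i in ]c, 1[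
   has chi^2_nu(c_i) < K_i^*; as the quantile is nondecreasing,
   chi^2_nu(c) < K_i^* for every i, and summing puts c in the set defining
   the global level.  Monotonicity of the quantile holds for the normalized
   CDF of any nonnegative density supported in [0, +oo[. *)

Definition density_cdf {R : realType} (f : R -> R) (x : R) : R :=
  fine (\int[@lebesgue_measure R]_(t in `]-oo, x]) (f t)%:E)
  / fine (\int[@lebesgue_measure R]_(t in [set: R]) (f t)%:E).

Definition density_quantile {R : realType} (f : R -> R) (c : R) : R :=
  inf [set x : R | c <= density_cdf f x].

Section DensityQuantile.
Variables (R : realType) (f : R -> R).
Hypothesis f_ge0 : forall x, 0 <= f x.
Hypothesis mf : measurable_fun [set: R] (fun x => (f x)%:E).
Hypothesis f_le0 : forall x, x <= 0 -> f x = 0.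

Local Notation mu := (@lebesgue_measure R).
Local Notation F x := (\int[mu]_(t in `]-oo, x]) (f t)%:E)%E.
Local Notation I := (\int[mu]_(t in [set: R]) (f t)%:E)%E.

Lemma integral_itvNy_ge0 x : (0 <= F x)%E.
Proof. by apply: integral_ge0 => t _; rewrite lee_fin. Qed.

Lemma integral_itvNy_le x : (F x <= I)%E.
Proof. by apply: ge0_subset_integral => // t _; rewrite lee_fin. Qed.

Lemma le_integral_itvNy x y : x <= y -> (F x <= F y)%E.
Proof.
move=> xy; apply: ge0_subset_integral => //.
- exact: measurable_funS mf.
- by move=> t _; rewrite lee_fin.
- by move=> t /=; rewrite !in_itv /= => /le_trans; apply.
Qed.

Lemma integral_itvNy_nat_sup : I = ereal_sup (range (fun n : nat => F n%:R)).
Proof.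
have -> : [set: R] = \bigcup_n `]-oo, (n%:R : R)].
  apply/seteqP; split => // x _; exists (Num.truncn x).+1 => //=.
  by rewrite in_itv /= ltW // truncnS_gt.
have F_nd : nondecreasing_seq (fun n : nat => F n%:R).
  by move=> n m nm; apply: le_integral_itvNy; rewrite ler_nat.
rewrite -(cvg_lim _ (ereal_nondecreasing_cvgn F_nd)) //.
apply/esym/cvg_lim => //; apply: ge0_nondecreasing_set_cvg_integral => //.
- move=> n m nm; apply/subsetPset => x /=; rewrite !in_itv /= => /le_trans; apply.
  by rewrite ler_nat.
- move=> n; exact: measurable_funS mf.
- by move=> n t _; rewrite lee_fin.
Qed.

Lemma density_cdf_le0 x : x <= 0 -> density_cdf f x = 0.
Proof.
move=> x0; rewrite /density_cdf (_ : F x = 0%E) ?mul0r //.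
apply: integral0_eq => t /=; rewrite in_itv /= => tx.
by rewrite f_le0 // (le_trans tx x0).
Qed.

Lemma lbound_density_cdf_ge c : 0 < c -> lbound [set x | c <= density_cdf f x] 0.
Proof.
move=> c0 x /=; apply: contraTT; rewrite -ltNge => /ltW/density_cdf_le0->.
by rewrite -ltNge.
Qed.

(* The total mass I is not assumed finite or nonzero; a positive value of
   the CDF rules out both degenerate cases, where the division yields 0. *)
Lemma density_cdf_ge_lt1 x c : 0 < density_cdf f x -> c < 1 ->
  exists y, c <= density_cdf f y.
Proof.
rewrite /density_cdf => + c1.
have Fx_ge0 := integral_itvNy_ge0 x.
move: integral_itvNy_le integral_itvNy_nat_sup.
case: I => [r| |] /=; rewrite ?invr0 ?mulr0 ?ltxx // => F_le I_sup cdf_gt0.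
have r_gt0 : 0 < r.
  rewrite lt_def; apply/andP; split; last by rewrite -lee_fin (le_trans Fx_ge0).
  by apply: contraTneq cdf_gt0 => ->; rewrite invr0 mulr0 ltxx.
have : ((c * r)%:E < ereal_sup (range (fun n : nat => F n%:R)))%E.
  by rewrite -I_sup lte_fin gtr_pMl.
case/ereal_sup_gt => _ [n _ <-] crFn; exists n%:R.
move: crFn (F_le n%:R) (integral_itvNy_ge0 n%:R).
case: (F n%:R) => [p| |] //=; rewrite lte_fin => crp _ _.
by rewrite ler_pdivlMr // ltW.
Qed.

Lemma density_quantile_le c c' : 0 < c -> c <= c' -> c' < 1 ->
  density_quantile f c <= density_quantile f c'.
Proof.
move=> c0 cc' c'1; rewrite /density_quantile.
set S := [set x | c <= _]; set S' := [set x | c' <= _].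
have [S'0|/set0P[x c'x]] := eqVneq S' set0.
  suff -> : S = set0 by rewrite S'0.
  apply/seteqP; split => // y /= cy.
  have [z c'z] := density_cdf_ge_lt1 y c' (lt_le_trans c0 cy) c'1.
  by have : S' z by []; rewrite S'0.
apply: lb_le_inf; first by exists x.
move=> y /= c'y; apply: ge_inf; first by exists 0; exact: lbound_density_cdf_ge.
exact: le_trans cc' c'y.
Qed.

End DensityQuantile.

Section ChiSquared.
Variables (R : realType) (nu : nat).

Lemma chi2_kernel_ge0 (x : R) : 0 <= chi2_kernel nu x.
Proof.
by rewrite /chi2_kernel; case: ifP => // _; rewrite mulr_ge0 ?powR_ge0 ?expR_ge0.
Qed.

Lemma measurable_chi2_kernel :
  measurable_fun [set: R] (fun x => (chi2_kernel nu x)%:E).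
Proof.
apply/measurable_EFinP; apply: measurable_fun_ifT => //.
- exact: measurable_fun_ltr.
- apply: measurable_funM; first exact: measurable_powR.
  by apply: measurableT_comp; [exact: measurable_expR | exact: measurable_funM].
Qed.

Lemma chi2_kernel_le0 (x : R) : x <= 0 -> chi2_kernel nu x = 0.
Proof. by rewrite /chi2_kernel leNgt => /negbTE->. Qed.

Lemma chi2_quantile_le (c c' : R) : 0 < c -> c <= c' -> c' < 1 ->
  chi2_quantile nu c <= chi2_quantile nu c'.
Proof.
exact: density_quantile_le chi2_kernel_ge0 measurable_chi2_kernel chi2_kernel_le0 _ _.
Qed.

Lemma chi2_quantile_lt_of_lt_conf_level (K c : R) :
  0 < c -> c < conf_level nu K -> chi2_quantile nu c < K.
Proof.
rewrite /conf_level => c0; set L := [set c : R | _] => c_lt_supL.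
have L0 : L !=set0.
  apply/set0P; apply: contraTneq c_lt_supL => ->.
  by rewrite sup0 -leNgt ltW.
have [y [/andP[_ y1] qy] /ltW cy] := sup_gt L0 c_lt_supL.
by apply: le_lt_trans qy; apply: chi2_quantile_le.
Qed.

End ChiSquared.

Lemma le_sup_itvoo_subset (R : realType) (A : set R) (m : R) :
  has_ubound A -> A `<=` [set c | 0 < c] -> [set c | 0 < c < m] `<=` A ->
  m <= sup A.
Proof.
move=> ubA A_gt0 mA.
have supA_ge0 : 0 <= sup A.
  have [->|/set0P[a Aa]] := eqVneq A set0; first by rewrite sup0.
  exact: le_trans (ltW (A_gt0 _ Aa)) (ub_le_sup ubA Aa).
rewrite leNgt; apply/negP => supA_lt_m.
have /(ub_le_sup ubA) : A ((sup A + m) / 2) by apply: mA; apply/andP; split; lra.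
lra.
Qed.

Theorem theorem2 (R : realType) (nu M : nat) (hnu : (1 <= nu)%N) (hM : (1 <= M)%N)
  (K : 'I_M -> R) :
  \big[Order.min/1]_(i < M) conf_level nu (K i) <= global_conf_level nu K.
Proof.
set m := \big[Order.min/1]_(i < M) conf_level nu (K i).
apply: le_sup_itvoo_subset.
- by exists 1 => c [/andP[_ /ltW]].
- by move=> c [/andP[]].
move=> c /andP[c0 cm]; split.
  by rewrite c0 (lt_le_trans cm) // bigmin_le_id.
apply: ltr_sum => [|i _].
  by apply/hasP; exists (Ordinal hM); rewrite ?mem_index_enum.
apply: chi2_quantile_lt_of_lt_conf_level c0 _.
exact: lt_le_trans cm (bigmin_le _ _ _).
Qed.
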